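(* Let $\kappa_1,\kappa_2,\kappa_3>0$ and let $Y_t$ be the continuous-time Markov chain on $\mathbb N_0$ with transitions $x\to x+1$ at rate $\kappa_1x+\kappa_2x(x-1)$ and $x\to x-2$ at rate $\kappa_3x(x-1)(x-2)$ (the mass-action network $S\to2S$, $2S\to3S$, $3S\to S$). Then every stationary distribution $\pi$ of $Y_t$ with unbounded support satisfies $\pi\in\mathcal P^{1+}_1\cap\mathcal P^{1-}_1$.
   Context: A stationary distribution is a probability measure $\pi$ on $\mathbb N_0$ satisfying the master equation $0=\sum_{\omega}\lambda_\omega(x-\omega)\pi(x-\omega)-\sum_\omega\lambda_\omega(x)\pi(x)$ for all $x$, where $\lambda_\omega(x)$ is the rate of $x\to x+\omega$ (zero at negative arguments). $T_\pi(x)=\sum_{y\ge x}\pi(y)$. For non-negative $f,g$, $f\lesssim g$ (equivalently $g\gtrsim f$) means there are $C,N>0$ with $f(x)\le Cg(x)$ for all $x\ge N$; $\exp(-h(x)(1+o(1)))$ means $\exp(-h(x)(1+\epsilon(x)))$ for some $\epsilon(x)\to0$. $\mathcal P^{1+}_a$ ($a>0$) is the set of probability distributions $\pi$ with $T_\pi(x)\lesssim\exp(-ax\log x(1+o(1)))$, and $\mathcal P^{1-}_a$ those with $T_\pi(x)\gtrsim\exp(-ax\log x(1+o(1)))$. *)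

From Stdlib Require Import Reals ZArith List Lra.
From Coquelicot Require Import Coquelicot.
Open Scope R_scope.

(* A reaction is a pair (omega, lambda_omega): jump vector and rate function on Z. *)
Definition reaction := (Z * (Z -> R))%type.

Definition piZ (pi : nat -> R) (z : Z) : R :=
  if (z <? 0)%Z then 0 else pi (Z.to_nat z).

Definition prob_dist (pi : nat -> R) : Prop :=
  (forall x, 0 <= pi x) /\ is_series pi 1.

Definition master_rhs (rs : list reaction) (pi : nat -> R) (x : Z) : R :=
  fold_right (fun (r : reaction) acc =>
     let (w, lam) := r in
     lam (x - w)%Z * piZ pi (x - w)%Z - lam x * piZ pi x + acc) 0 rs.

Definition stationary (rs : list reaction) (pi : nat -> R) : Prop :=
  prob_dist pi /\ forall x : nat, master_rhs rs pi (Z.of_nat x) = 0.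

Definition Tail (pi : nat -> R) (x : nat) : R := Series (fun k => pi (x + k)%nat).

Definition lesssim (f g : nat -> R) : Prop :=
  exists (C : R) (N : nat), 0 < C /\ (0 < N)%nat /\ forall x, (N <= x)%nat -> f x <= C * g x.

Definition xlogx_profile (a : R) (eps : nat -> R) (x : nat) : R :=
  exp (- (a * INR x * ln (INR x) * (1 + eps x))).

Definition P1plus (a : R) (pi : nat -> R) : Prop :=
  prob_dist pi /\
  exists eps : nat -> R, is_lim_seq eps 0 /\ lesssim (Tail pi) (xlogx_profile a eps).

Definition P1minus (a : R) (pi : nat -> R) : Prop :=
  prob_dist pi /\
  exists eps : nat -> R, is_lim_seq eps 0 /\ lesssim (xlogx_profile a eps) (Tail pi).

Definition unbounded_support (pi : nat -> R) : Prop :=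
  forall N : nat, exists x : nat, (N <= x)%nat /\ 0 < pi x.

(* The network S -> 2S (rate k1 x), 2S -> 3S (rate k2 x(x-1)), 3S -> S (rate k3 x(x-1)(x-2)):
   jumps +1 at rate k1 x + k2 x(x-1), and -2 at rate k3 x(x-1)(x-2). *)
Definition network (k1 k2 k3 : R) : list reaction :=
  (1%Z, fun x : Z => k1 * IZR x + k2 * IZR x * (IZR x - 1)) ::
  ((-2)%Z, fun x : Z => k3 * IZR x * (IZR x - 1) * (IZR x - 2)) :: nil.

(* The stationary distribution pi of  S -> 2S, 2S -> 3S, 3S -> S  has tails of
   Poisson type: for suitable constants L, K > 0,
       a L^x / x!  <=  T_pi(x)  <=  A K^x / x!     for x large,
   and since L^x / x! = exp (- x ln x (1 + o(1))) for every fixed L > 0, this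
   places pi in P^{1+}_1 and in P^{1-}_1.

   Unbounded support is used only to make the lower bound nontrivial: some
   pi(x0) with x0 >= 2 is positive, so the multiple of L^x / x! is positive. *)
From Stdlib Require Import Reals Lra Lia ZArith.
From Coquelicot Require Import Coquelicot.
Open Scope R_scope.

Lemma eventually_INR_gt (r : R) : exists N : nat, forall x, (N <= x)%nat -> r < INR x.
Proof.
  destruct (archimed (Rmax r 0)) as [Hup _].
  assert (Hpos : (0 <= up (Rmax r 0))%Z).
  { apply le_IZR. pose proof (Rmax_r r 0). simpl. lra. }
  exists (Z.to_nat (up (Rmax r 0))). intros x Hx.
  apply le_INR in Hx. rewrite INR_IZR_INZ, Z2Nat.id in Hx by exact Hpos.
  pose proof (Rmax_l r 0). lra.
Qed.

Definition fact_weight (K : R) (x : nat) : R := K ^ x / INR (fact x).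

Lemma fact_weight_pos (K : R) (x : nat) : 0 < K -> 0 < fact_weight K x.
Proof.
  intros HK. apply Rdiv_lt_0_compat; [apply pow_lt, HK | apply INR_fact_lt_0].
Qed.

Lemma fact_weight_succ (K : R) (x : nat) :
  fact_weight K (S x) = K / (INR x + 1) * fact_weight K x.
Proof.
  unfold fact_weight. change (fact (S x)) with (S x * fact x)%nat.
  rewrite mult_INR, S_INR. simpl pow. pose proof (INR_fact_lt_0 x). pose proof (pos_INR x).
  field. lra.
Qed.

Lemma ln_1_plus_le (y : R) : 0 < 1 + y -> ln (1 + y) <= y.
Proof. intros H. rewrite <- (ln_exp y) at 2. apply ln_le; [exact H | apply exp_ineq1_le]. Qed.

Lemma ln_fact_bounds (n : nat) : (1 <= n)%nat ->
  INR n * ln (INR n) - INR n <= ln (INR (fact n)) <= INR n * ln (INR n).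
Proof.
  induction n as [|n IH]; intros Hn; [lia|].
  destruct (Nat.eq_dec n 0) as [->|Hn0]; [simpl; rewrite ln_1; lra|].
  specialize (IH ltac:(lia)).
  assert (HX : 1 <= INR n) by (apply (le_INR 1); lia).
  assert (Hinv : 0 < / INR n) by (apply Rinv_0_lt_compat; lra).
  change (fact (S n)) with (S n * fact n)%nat.
  rewrite mult_INR, ln_mult, S_INR; [|apply lt_0_INR; lia|apply INR_fact_lt_0].
  assert (Hsplit : ln (INR n + 1) = ln (INR n) + ln (1 + / INR n)).
  { rewrite <- ln_mult by lra. f_equal. field. lra. }
  assert (Hupper : ln (1 + / INR n) <= / INR n) by (apply ln_1_plus_le; lra).
  assert (Hlower : 0 <= ln (1 + / INR n)) by (rewrite <- ln_1; apply ln_le; lra).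
  assert (Hcancel : INR n * / INR n = 1) by (field; lra).
  assert (Hln : 0 <= ln (INR n)) by (rewrite <- ln_1; apply ln_le; lra).
  rewrite Hsplit. split; nra.
Qed.

(* The correction eps_L for which exp (- x ln x (1 + eps_L x)) = L^x / x!. *)
Definition fact_profile_eps (L : R) (x : nat) : R :=
  (ln (INR (fact x)) - INR x * ln L) / (INR x * ln (INR x)) - 1.

Lemma xlogx_profile_fact (L : R) (x : nat) : 0 < L -> (2 <= x)%nat ->
  xlogx_profile 1 (fact_profile_eps L) x = fact_weight L x.
Proof.
  intros HL Hx. unfold xlogx_profile, fact_profile_eps, fact_weight.
  assert (HX : 2 <= INR x) by (apply (le_INR 2); lia).
  assert (Hln : 0 < ln (INR x)) by (rewrite <- ln_1; apply ln_increasing; lra).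
  match goal with |- exp ?e = _ =>
    replace e with (INR x * ln L + - ln (INR (fact x))) by (field; split; lra) end.
  rewrite exp_plus, exp_Ropp, exp_ln by apply INR_fact_lt_0.
  rewrite <- (Rpower_pow x L HL). reflexivity.
Qed.

Lemma fact_profile_eps_bound (L : R) (x : nat) : (2 <= x)%nat ->
  Rabs (fact_profile_eps L x) <= (1 + Rabs (ln L)) / ln (INR x).
Proof.
  intros Hx. unfold fact_profile_eps.
  assert (HX : 2 <= INR x) by (apply (le_INR 2); lia).
  assert (Hln : 0 < ln (INR x)) by (rewrite <- ln_1; apply ln_increasing; lra).
  destruct (ln_fact_bounds x ltac:(lia)) as [Hlo Hhi].
  pose proof (Rle_abs (ln L)). pose proof (Rabs_maj2 (ln L)).
  replace ((ln (INR (fact x)) - INR x * ln L) / (INR x * ln (INR x)) - 1)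
    with ((ln (INR (fact x)) - INR x * ln L - INR x * ln (INR x)) / INR x / ln (INR x))
    by (field; split; lra).
  replace ((1 + Rabs (ln L)) / ln (INR x)) with (INR x * (1 + Rabs (ln L)) / INR x / ln (INR x))
    by (field; split; lra).
  rewrite !Rabs_div by lra. rewrite (Rabs_pos_eq (INR x)), (Rabs_pos_eq (ln (INR x))) by lra.
  apply Rmult_le_compat_r; [left; apply Rinv_0_lt_compat; lra|].
  apply Rmult_le_compat_r; [left; apply Rinv_0_lt_compat; lra|].
  apply Rabs_le. nra.
Qed.

Lemma fact_profile_eps_lim (L : R) : is_lim_seq (fact_profile_eps L) 0.
Proof.
  apply is_lim_seq_spec. intros [e He]. simpl.
  set (M := 1 + Rabs (ln L)).
  assert (HM : 0 < M) by (unfold M; pose proof (Rabs_pos (ln L)); lra).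
  destruct (eventually_INR_gt (Rmax 2 (exp (M / e)))) as [N HN].
  exists N. intros x Hx. specialize (HN x Hx).
  pose proof (Rmax_l 2 (exp (M / e))). pose proof (Rmax_r 2 (exp (M / e))).
  assert (Hx2 : (2 <= x)%nat) by (apply INR_le; simpl; lra).
  assert (Hln : M / e < ln (INR x)).
  { rewrite <- (ln_exp (M / e)). apply ln_increasing; [apply exp_pos | lra]. }
  assert (HMe : 0 < M / e) by (apply Rdiv_lt_0_compat; lra).
  rewrite Rminus_0_r. eapply Rle_lt_trans; [apply fact_profile_eps_bound, Hx2|].
  fold M. apply Rlt_div_l; [lra|].
  apply (Rmult_lt_compat_l e) in Hln; [|exact He].
  replace (e * (M / e)) with M in Hln by (field; lra). lra.
Qed.

Lemma ratio_factor_nonneg (K : R) (x : nat) : 0 < K -> 0 <= K / (INR x + 1).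
Proof. intros HK. pose proof (pos_INR x). apply Rlt_le, Rdiv_lt_0_compat; lra. Qed.

(* If f (x+1) <= K/(x+1) f x from N0 on, then f is dominated by a multiple of
   the weight K^x / x!: the ratio f / fact_weight K is nonincreasing. *)
Lemma ratio_above (f : nat -> R) (K : R) (N0 : nat) : 0 < K ->
  (forall x, (N0 <= x)%nat -> f (S x) <= K / (INR x + 1) * f x) ->
  forall x, (N0 <= x)%nat -> f x <= f N0 / fact_weight K N0 * fact_weight K x.
Proof.
  intros HK Hstep x Hx. pose proof (fact_weight_pos K N0 HK).
  induction Hx as [|x Hx IH]; [right; field; lra|].
  rewrite fact_weight_succ. eapply Rle_trans; [apply Hstep, Hx|].
  replace (f N0 / fact_weight K N0 * (K / (INR x + 1) * fact_weight K x))
    with (K / (INR x + 1) * (f N0 / fact_weight K N0 * fact_weight K x)) by ring.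
  apply Rmult_le_compat_l; [apply ratio_factor_nonneg, HK | exact IH].
Qed.

(* The symmetric statement: a reverse ratio bound makes f / fact_weight K nondecreasing. *)
Lemma ratio_below (f : nat -> R) (K : R) (N0 : nat) : 0 < K ->
  (forall x, (N0 <= x)%nat -> K / (INR x + 1) * f x <= f (S x)) ->
  forall x, (N0 <= x)%nat -> f N0 / fact_weight K N0 * fact_weight K x <= f x.
Proof.
  intros HK Hstep x Hx. pose proof (fact_weight_pos K N0 HK).
  induction Hx as [|x Hx IH]; [right; field; lra|].
  rewrite fact_weight_succ. eapply Rle_trans; [|apply Hstep, Hx].
  replace (f N0 / fact_weight K N0 * (K / (INR x + 1) * fact_weight K x))
    with (K / (INR x + 1) * (f N0 / fact_weight K N0 * fact_weight K x)) by ring.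
  apply Rmult_le_compat_l; [apply ratio_factor_nonneg, HK | exact IH].
Qed.

(* Once K / (x+1) <= 1/2, such an f halves at every step. *)
Lemma ratio_eventually_half (f : nat -> R) (K : R) (N0 : nat) :
  0 < K -> (forall x, 0 <= f x) ->
  (forall x, (N0 <= x)%nat -> f (S x) <= K / (INR x + 1) * f x) ->
  exists N, (N0 <= N)%nat /\ forall x, (N <= x)%nat -> f (S x) <= / 2 * f x.
Proof.
  intros HK Hf Hstep. destruct (eventually_INR_gt (2 * K)) as [N1 HN1].
  exists (N0 + N1)%nat. split; [lia|]. intros x Hx.
  eapply Rle_trans; [apply Hstep; lia|]. apply Rmult_le_compat_r; [apply Hf|].
  specialize (HN1 x ltac:(lia)).
  apply Rmult_le_reg_l with (INR x + 1); [lra|].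
  replace ((INR x + 1) * (K / (INR x + 1))) with K by (field; lra). lra.
Qed.

Lemma tail_le_of_halving (f : nat -> R) (N : nat) : (forall x, 0 <= f x) ->
  (forall x, (N <= x)%nat -> f (S x) <= / 2 * f x) ->
  forall x, (N <= x)%nat -> Tail f x <= 2 * f x.
Proof.
  intros Hf Hhalf x Hx.
  assert (Hgeom : forall k, f (x + k)%nat <= f x * (/ 2) ^ k).
  { induction k as [|k IH]; [rewrite Nat.add_0_r; simpl; lra|].
    replace (x + S k)%nat with (S (x + k)) by lia.
    eapply Rle_trans; [apply Hhalf; lia|]. simpl. pose proof (Hf (x + k)%nat). nra. }
  assert (Hsum : is_series (fun k => (/ 2) ^ k) 2).
  { assert (Hratio : Rabs (/ 2) < 1) by (rewrite Rabs_pos_eq; lra).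
    pose proof (is_series_geom (/ 2) Hratio) as Hgeom2.
    replace (/ (1 - / 2)) with 2 in Hgeom2 by field. exact Hgeom2. }
  unfold Tail. eapply Rle_trans.
  { apply (Series_le _ (fun k => f x * (/ 2) ^ k)).
    - intros k. split; [apply Hf | apply Hgeom].
    - apply (ex_series_scal_l (V := R_NormedModule)). exists 2. exact Hsum. }
  rewrite Series_scal_l, (is_series_unique (pow (/ 2)) 2 Hsum). lra.
Qed.

Lemma tail_above_fact_weight (f : nat -> R) (K : R) (N0 : nat) :
  0 < K -> (forall x, 0 <= f x) ->
  (forall x, (N0 <= x)%nat -> f (S x) <= K / (INR x + 1) * f x) ->
  exists C N, 0 < C /\ forall x, (N <= x)%nat -> Tail f x <= C * fact_weight K x.
Proof.
  intros HK Hf Hstep.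
  destruct (ratio_eventually_half f K N0 HK Hf Hstep) as [N [HN Hhalf]].
  set (c := f N0 / fact_weight K N0).
  assert (Hc : 0 <= c).
  { apply Rmult_le_pos; [apply Hf|]. left. apply Rinv_0_lt_compat, fact_weight_pos, HK. }
  exists (2 * c + 1), N. split; [lra|]. intros x Hx.
  pose proof (fact_weight_pos K x HK) as Hw.
  assert (Hdom : f x <= c * fact_weight K x) by (apply ratio_above; [exact HK | exact Hstep | lia]).
  eapply Rle_trans; [apply (tail_le_of_halving f N Hf Hhalf x Hx)|]. nra.
Qed.

Lemma tail_ge_two_terms (f : nat -> R) (x : nat) : (forall n, 0 <= f n) -> ex_series f ->
  f x + f (S x) <= Tail f x.
Proof.
  intros Hf Hex. unfold Tail. set (g := fun k => f (x + k)%nat).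
  assert (Hg : ex_series g) by (apply (ex_series_incr_n f x), Hex).
  rewrite Series_incr_1 by exact Hg.
  rewrite Series_incr_1 by (apply (ex_series_incr_1 g), Hg).
  assert (Hrest : 0 <= Series (fun k => g (S (S k)))).
  { assert (Hzero : Series (fun k => 0 * g (S (S k))) = 0) by (rewrite Series_scal_l; ring).
    rewrite <- Hzero. apply Series_le.
    - intros k. rewrite Rmult_0_l. split; [lra | apply Hf].
    - apply (ex_series_incr_n g 2), Hg. }
  unfold g in *. rewrite Nat.add_0_r, Nat.add_1_r. lra.
Qed.

Lemma tail_below_fact_weight (f : nat -> R) (K : R) (N0 : nat) :
  0 < K -> (forall x, 0 <= f x) -> ex_series f ->
  (forall x, (N0 <= x)%nat ->
     K / (INR x + 1) * (f x + f (S x)) <= f (S x) + f (S (S x))) ->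
  (exists x0, (N0 <= x0)%nat /\ 0 < f x0) ->
  exists c N, 0 < c /\ forall x, (N <= x)%nat -> c * fact_weight K x <= Tail f x.
Proof.
  intros HK Hf Hex Hstep [x0 [Hx0 Hpos]].
  set (u := fun x => f x + f (S x)).
  assert (Hu : forall x, (x0 <= x)%nat -> u x0 / fact_weight K x0 * fact_weight K x <= u x).
  { apply ratio_below; [exact HK|]. intros x Hx. apply Hstep. lia. }
  exists (u x0 / fact_weight K x0), x0. split.
  - apply Rdiv_lt_0_compat; [|apply fact_weight_pos, HK].
    unfold u. pose proof (Hf (S x0)). lra.
  - intros x Hx. eapply Rle_trans; [apply Hu, Hx|]. apply tail_ge_two_terms; assumption.
Qed.

Lemma P1plus_of_tail_bound (pi : nat -> R) (K : R) : prob_dist pi -> 0 < K ->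
  (exists C N, 0 < C /\ forall x, (N <= x)%nat -> Tail pi x <= C * fact_weight K x) ->
  P1plus 1 pi.
Proof.
  intros Hpi HK [C [N [HC Hbound]]]. split; [exact Hpi|].
  exists (fact_profile_eps K). split; [apply fact_profile_eps_lim|].
  exists C, (N + 2)%nat. split; [exact HC|]. split; [lia|].
  intros x Hx. rewrite xlogx_profile_fact by (auto; lia). apply Hbound. lia.
Qed.

Lemma P1minus_of_tail_bound (pi : nat -> R) (K : R) : prob_dist pi -> 0 < K ->
  (exists c N, 0 < c /\ forall x, (N <= x)%nat -> c * fact_weight K x <= Tail pi x) ->
  P1minus 1 pi.
Proof.
  intros Hpi HK [c [N [Hc Hbound]]]. split; [exact Hpi|].
  exists (fact_profile_eps K). split; [apply fact_profile_eps_lim|].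
  exists (/ c), (N + 2)%nat. split; [apply Rinv_0_lt_compat, Hc|]. split; [lia|].
  intros x Hx. rewrite xlogx_profile_fact by (auto; lia).
  apply (Rmult_le_reg_l c); [exact Hc|].
  rewrite <- Rmult_assoc, Rinv_r, Rmult_1_l by lra. apply Hbound. lia.
Qed.

Definition birth_rate (k1 k2 X : R) : R := k1 * X + k2 * X * (X - 1).
Definition death_rate (k3 X : R) : R := k3 * X * (X - 1) * (X - 2).

Lemma piZ_of_nat (pi : nat -> R) (n : nat) : piZ pi (Z.of_nat n) = pi n.
Proof.
  unfold piZ. replace (Z.of_nat n <? 0)%Z with false by (symmetry; apply Z.ltb_ge; lia).
  now rewrite Nat2Z.id.
Qed.

Lemma network_master_balance (k1 k2 k3 : R) (pi : nat -> R) (x : nat) :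
  master_rhs (network k1 k2 k3) pi (Z.of_nat x) = 0 ->
  (match x with O => 0 | S n => birth_rate k1 k2 (INR n) * pi n end)
  + death_rate k3 (INR x + 2) * pi (x + 2)%nat
  = (birth_rate k1 k2 (INR x) + death_rate k3 (INR x)) * pi x.
Proof.
  unfold master_rhs, network; cbn [List.fold_right].
  replace (Z.of_nat x - -2)%Z with (Z.of_nat (x + 2)) by lia.
  rewrite !piZ_of_nat, <- !INR_IZR_INZ, plus_INR. simpl (INR 2).
  unfold birth_rate, death_rate. destruct x as [|n].
  - unfold piZ at 1. simpl. intros H. nra.
  - replace (Z.of_nat (S n) - 1)%Z with (Z.of_nat n) by lia.
    rewrite piZ_of_nat, <- INR_IZR_INZ, S_INR. intros H. nra.
Qed.

(* Flux balance across the cut between {0..x} and {x+1,...}: the only jump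
   crossing upwards is x -> x+1, the jumps crossing downwards are x+1 -> x-1 and
   x+2 -> x.  Obtained by summing the master equation over {0..x}. *)
Lemma network_cut_balance (k1 k2 k3 : R) (pi : nat -> R) :
  (forall x : nat, master_rhs (network k1 k2 k3) pi (Z.of_nat x) = 0) ->
  forall x, birth_rate k1 k2 (INR x) * pi x =
    death_rate k3 (INR x + 1) * pi (S x) + death_rate k3 (INR x + 2) * pi (S (S x)).
Proof.
  intros Hmaster x. induction x as [|n IH].
  - pose proof (network_master_balance k1 k2 k3 pi 0 (Hmaster 0%nat)) as E.
    simpl in E |- *. unfold birth_rate, death_rate in *. nra.
  - pose proof (network_master_balance k1 k2 k3 pi (S n) (Hmaster (S n))) as E.
    replace (S n + 2)%nat with (S (S (S n))) in E by lia.
    rewrite S_INR in *. unfold birth_rate, death_rate in *. nra.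
Qed.

Section NetworkTailRatios.

Variables k1 k2 k3 : R.
Variable pi : nat -> R.
Hypothesis Hk1 : 0 < k1.
Hypothesis Hk2 : 0 < k2.
Hypothesis Hk3 : 0 < k3.
Hypothesis pi_nonneg : forall x, 0 <= pi x.
Hypothesis cut_balance : forall x, birth_rate k1 k2 (INR x) * pi x =
  death_rate k3 (INR x + 1) * pi (S x) + death_rate k3 (INR x + 2) * pi (S (S x)).

(* Dropping the x+2 term of the cut balance, and using birth_rate x <= (k1+k2) x (x-1):
   pi decays at least like ((k1+k2)/k3)^x / x!. *)
Lemma network_ratio_upper (x : nat) : (2 <= x)%nat ->
  pi (S x) <= (k1 + k2) / k3 / (INR x + 1) * pi x.
Proof.
  intros Hx. specialize (cut_balance x).
  assert (HX : 2 <= INR x) by (apply (le_INR 2); lia).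
  pose proof (pi_nonneg x). pose proof (pi_nonneg (S x)). pose proof (pi_nonneg (S (S x))).
  set (X := INR x) in *. unfold birth_rate, death_rate in cut_balance.
  apply (Rmult_le_reg_l (k3 * (X + 1) * X * (X - 1))).
  { apply Rmult_lt_0_compat; [|lra]. apply Rmult_lt_0_compat; [|lra]. nra. }
  replace (k3 * (X + 1) * X * (X - 1) * ((k1 + k2) / k3 / (X + 1) * pi x))
    with ((k1 + k2) * X * (X - 1) * pi x) by (field; lra).
  assert (Hdrop : 0 <= k3 * (X + 2) * (X + 2 - 1) * (X + 2 - 2) * pi (S (S x))).
  { apply Rmult_le_pos; [|assumption]. apply Rmult_le_pos; [|lra]. nra. }
  assert (Hbirth : k1 * X * pi x <= k1 * X * (X - 1) * pi x).
  { apply Rmult_le_compat_r; [assumption|].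
    assert (0 <= k1 * X * (X - 2)) by (apply Rmult_le_pos; [apply Rmult_le_pos|]; lra).
    lra. }
  lra.
Qed.

(* Keeping both terms, with birth_rate x >= k2 x (x+2) / 4 and death_rate
   increasing: c pi x <= (x+1) (pi (x+1) + pi (x+2)) where c = k2 / (4 k3). *)
Lemma network_cut_lower (x : nat) : (2 <= x)%nat ->
  k2 / (4 * k3) * pi x <= (INR x + 1) * (pi (S x) + pi (S (S x))).
Proof.
  intros Hx. specialize (cut_balance x).
  assert (HX : 2 <= INR x) by (apply (le_INR 2); lia).
  pose proof (pi_nonneg x). pose proof (pi_nonneg (S x)). pose proof (pi_nonneg (S (S x))).
  set (X := INR x) in *. unfold birth_rate, death_rate in cut_balance.
  apply (Rmult_le_reg_l (k3 * X * (X + 2))); [nra|].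
  replace (k3 * X * (X + 2) * (k2 / (4 * k3) * pi x)) with (k2 * X * (X + 2) / 4 * pi x)
    by (field; lra).
  assert (Hbirth : k2 * X * (X + 2) / 4 <= k1 * X + k2 * X * (X - 1)).
  { assert (0 <= k2 * X * (X - 2)) by (apply Rmult_le_pos; [apply Rmult_le_pos|]; lra).
    assert (0 <= k1 * X) by (apply Rmult_le_pos; lra). lra. }
  assert (Hdeath : k3 * (X + 1) * (X + 1 - 1) * (X + 1 - 2) * pi (S x) <=
                   k3 * (X + 2) * (X + 2 - 1) * (X + 2 - 2) * pi (S x))
    by (apply Rmult_le_compat_r; [assumption | nra]).
  nra.
Qed.

Lemma network_ratio_lower (x : nat) : (2 <= x)%nat ->
  let c := k2 / (4 * k3) in
  c / (1 + c) / (INR x + 1) * (pi x + pi (S x)) <= pi (S x) + pi (S (S x)).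
Proof.
  intros Hx c. pose proof (network_cut_lower x Hx) as Hcut. fold c in Hcut.
  assert (Hc : 0 < c) by (unfold c; apply Rdiv_lt_0_compat; lra).
  assert (HX : 2 <= INR x) by (apply (le_INR 2); lia).
  pose proof (pi_nonneg x). pose proof (pi_nonneg (S x)). pose proof (pi_nonneg (S (S x))).
  set (v := pi (S x) + pi (S (S x))) in *. set (X := INR x) in *.
  apply (Rmult_le_reg_l ((X + 1) * (1 + c))); [nra|].
  replace ((X + 1) * (1 + c) * (c / (1 + c) / (X + 1) * (pi x + pi (S x))))
    with (c * pi x + c * pi (S x)) by (field; lra).
  assert (Hnext : c * pi (S x) <= c * v) by (apply Rmult_le_compat_l; unfold v; lra).
  assert (0 <= c * v * X) by (apply Rmult_le_pos; [apply Rmult_le_pos|]; unfold v in *; lra).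
  lra.
Qed.

End NetworkTailRatios.

Theorem mainTheorem12 (k1 k2 k3 : R) (pi : nat -> R) :
  0 < k1 -> 0 < k2 -> 0 < k3 ->
  stationary (network k1 k2 k3) pi ->
  unbounded_support pi ->
  P1plus 1 pi /\ P1minus 1 pi.
Proof.
  intros Hk1 Hk2 Hk3 [Hprob Hmaster] Hunbounded.
  pose proof Hprob as [Hnonneg Hsum].
  pose proof (network_cut_balance k1 k2 k3 pi Hmaster) as Hcut.
  set (c := k2 / (4 * k3)).
  assert (Hc : 0 < c) by (apply Rdiv_lt_0_compat; lra).
  split.
  - assert (HK : 0 < (k1 + k2) / k3) by (apply Rdiv_lt_0_compat; lra).
    apply (P1plus_of_tail_bound pi ((k1 + k2) / k3) Hprob HK).
    apply (tail_above_fact_weight pi _ 2 HK Hnonneg).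
    intros x Hx. exact (network_ratio_upper k1 k2 k3 pi Hk1 Hk3 Hnonneg Hcut x Hx).
  - assert (HL : 0 < c / (1 + c)) by (apply Rdiv_lt_0_compat; lra).
    apply (P1minus_of_tail_bound pi (c / (1 + c)) Hprob HL).
    apply (tail_below_fact_weight pi _ 2 HL Hnonneg (ex_intro _ 1 Hsum)).
    + intros x Hx. exact (network_ratio_lower k1 k2 k3 pi Hk1 Hk2 Hk3 Hnonneg Hcut x Hx).
    + destruct (Hunbounded 2%nat) as [x0 Hx0]. exists x0. exact Hx0.
Qed.
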